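(* Let $u>0$, $\Delta t,\Delta x>0$ with $\nu=u\Delta t/\Delta x\in(0,1]$. Let $a,b\in\mathbb R$, $x_0\in\mathbb R$, and let $c^{\rm ini}(x)=a$ for $x<x_0$ and $c^{\rm ini}(x)=b$ for $x>x_0$. Set $c_j^0=\frac1{\Delta x}\int_{(j-1/2)\Delta x}^{(j+1/2)\Delta x}c^{\rm ini}(x)\,dx$ and, for $n\ge0$, $c_j^{n+1}=c_j^n-\nu(c_{j+1/2}^n-c_{j-1/2}^n)$, where $c^n_{j+1/2}=\min(\max(\omega_{j+1/2},c_{j+1}^n),\Omega_{j+1/2})$ is the limited downwind flux computed from $(c^n_j)_j$. Then for all $n\ge0$ and $j\in\mathbb Z$, $$c_j^n=\frac1{\Delta x}\int_{(j-1/2)\Delta x}^{(j+1/2)\Delta x}c^{\rm ini}(x-un\Delta t)\,dx,$$ i.e. the scheme computes exactly the cell averages of the exact solution $c(t,x)=c^{\rm ini}(x-ut)$.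
   Context: Limited downwind flux: given $(c_j^n)_j$, let $m_{j+1/2}=\min(c_j^n,c_{j+1}^n)$, $M_{j+1/2}=\max(c_j^n,c_{j+1}^n)$, $\lambda_{j+1/2}=\frac1\nu(c_j^n-M_{j-1/2})+M_{j-1/2}$, $\Lambda_{j+1/2}=\frac1\nu(c_j^n-m_{j-1/2})+m_{j-1/2}$, and $[\omega_{j+1/2},\Omega_{j+1/2}]=[\lambda_{j+1/2},\Lambda_{j+1/2}]\cap[m_{j+1/2},M_{j+1/2}]$ (nonempty since it contains $c_j^n$ when $0<\nu\le1$). *)

From Stdlib Require Import Reals Lra ZArith.
Open Scope R_scope.

(* A grid function c : Z -> R, with c j = c_j.  Interface j+1/2 is indexed by j. *)
Definition m_half (c : Z -> R) (j : Z) : R := Rmin (c j) (c (j + 1)%Z).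
Definition M_half (c : Z -> R) (j : Z) : R := Rmax (c j) (c (j + 1)%Z).

Definition lam_half (nu : R) (c : Z -> R) (j : Z) : R :=
  (c j - M_half c (j - 1)%Z) / nu + M_half c (j - 1)%Z.
Definition Lam_half (nu : R) (c : Z -> R) (j : Z) : R :=
  (c j - m_half c (j - 1)%Z) / nu + m_half c (j - 1)%Z.

Definition omega_half (nu : R) (c : Z -> R) (j : Z) : R :=
  Rmax (lam_half nu c j) (m_half c j).
Definition Omega_half (nu : R) (c : Z -> R) (j : Z) : R :=
  Rmin (Lam_half nu c j) (M_half c j).

Definition ldw_flux (nu : R) (c : Z -> R) (j : Z) : R :=
  Rmin (Rmax (omega_half nu c j) (c (j + 1)%Z)) (Omega_half nu c j).

Definition ldw_step (nu : R) (c : Z -> R) (j : Z) : R :=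
  c j - nu * (ldw_flux nu c j - ldw_flux nu c (j - 1)%Z).

From Stdlib Require Import Reals Lra ZArith FunctionalExtensionality.
From Coquelicot Require Import Coquelicot.
Open Scope R_scope.

(* The cell averages of a single jump from [a] to [b] at [x = p * dx] are
   [b + (a - b) * clamp01 (p - j + 1/2)], the clamp being the fraction of cell
   [j] lying left of the jump.  On such data the limited downwind flux through
   every interface equals the exact flux over one time step, so one step of the
   scheme moves the jump from [p] to [p + nu]: the scheme transports this family
   exactly, and induction on [n] gives the theorem. *)

Definition clamp01 (t : R) : R := Rmin 1 (Rmax 0 t).

Lemma clamp01_le0 t : t <= 0 -> clamp01 t = 0.
Proof. intros; unfold clamp01, Rmin, Rmax; repeat destruct Rle_dec; lra. Qed.

Lemma clamp01_ge1 t : 1 <= t -> clamp01 t = 1.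
Proof. intros; unfold clamp01, Rmin, Rmax; repeat destruct Rle_dec; lra. Qed.

Lemma clamp01_id t : 0 <= t <= 1 -> clamp01 t = t.
Proof. intros; unfold clamp01, Rmin, Rmax; repeat destruct Rle_dec; lra. Qed.

Lemma Rmult_clamp01_div v x : 0 < v -> v * clamp01 (x / v) = Rmin v (Rmax 0 x).
Proof.
  intros hv. set (y := x / v).
  replace x with (y * v) by (unfold y; field; lra).
  unfold clamp01, Rmin, Rmax; repeat destruct Rle_dec; nra.
Qed.

(* Exact transport of the jump by [nu] in cell units, written as a flux balance. *)
Lemma clamp01_flux_balance nu t : 0 < nu ->
  clamp01 t - nu * (clamp01 ((t - 1 + nu) / nu) - clamp01 ((t + nu) / nu))
  = clamp01 (t + nu).
Proof.
  intros hnu.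
  rewrite Rmult_minus_distr_l, !Rmult_clamp01_div by lra.
  unfold clamp01, Rmin, Rmax; repeat destruct Rle_dec; lra.
Qed.

Definition flux3 (nu cl cm cr : R) : R :=
  Rmin (Rmax (Rmax ((cm - Rmax cl cm) / nu + Rmax cl cm) (Rmin cm cr)) cr)
       (Rmin ((cm - Rmin cl cm) / nu + Rmin cl cm) (Rmax cm cr)).

Lemma ldw_flux_flux3 nu c j :
  ldw_flux nu c j = flux3 nu (c (j - 1)%Z) (c j) (c (j + 1)%Z).
Proof.
  unfold ldw_flux, flux3, omega_half, Omega_half, lam_half, Lam_half, m_half, M_half.
  now rewrite Z.sub_add.
Qed.

Section Flux3.

Variable nu : R.
Hypothesis nu_gt0 : 0 < nu.
Hypothesis nu_le1 : nu <= 1.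

Let inv_nu_l : /nu * nu = 1.
Proof. field; lra. Qed.

Let inv_nu_ge1 : /nu >= 1.
Proof. nra. Qed.

Lemma flux3_const_right x y : flux3 nu x y y = y.
Proof.
  pose proof inv_nu_l; pose proof inv_nu_ge1.
  unfold flux3, Rdiv, Rmin, Rmax; repeat destruct Rle_dec; nra.
Qed.

Lemma flux3_const_left y z : flux3 nu y y z = y.
Proof.
  pose proof inv_nu_l; pose proof inv_nu_ge1.
  unfold flux3, Rdiv, Rmin, Rmax; repeat destruct Rle_dec; nra.
Qed.

Lemma flux3_convex a b t : 0 <= t <= 1 ->
  flux3 nu a (b + (a - b) * t) b = b + (a - b) * clamp01 ((t - 1 + nu) / nu).
Proof.
  intros ht. pose proof inv_nu_ge1.
  set (w := (1 - t) * / nu).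
  assert (0 <= w) by (unfold w; nra).
  assert (1 - t <= w) by (unfold w; nra).
  replace ((t - 1 + nu) / nu) with (1 - w) by (unfold w; field; lra).
  unfold flux3. destruct (Rle_dec a b);
    [ rewrite (Rmax_right a), (Rmin_left a), (Rmin_left (b + _)), (Rmax_right (b + _)) by nra
    | rewrite (Rmax_left a), (Rmin_right a), (Rmin_right (b + _)), (Rmax_left (b + _)) by nra ].
  all: replace ((b + (a - b) * t - (b + (a - b) * t)) / nu) with 0 by (field; lra).
  all: replace ((b + (a - b) * t - a) / nu) with ((b - a) * w) by (unfold w; field; lra).
  all: unfold clamp01, Rmin, Rmax; repeat destruct Rle_dec; nra.
Qed.

End Flux3.

Definition jump_avg (a b p : R) (j : Z) : R := b + (a - b) * clamp01 (p - IZR j + /2).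

Lemma ldw_flux_jump_avg nu a b p j : 0 < nu -> nu <= 1 ->
  ldw_flux nu (jump_avg a b p) j = b + (a - b) * clamp01 ((p - IZR j + /2 - 1 + nu) / nu).
Proof.
  intros hnu0 hnu1. rewrite ldw_flux_flux3. unfold jump_avg.
  rewrite minus_IZR, plus_IZR.
  set (t := p - IZR j + /2).
  replace (p - (IZR j - 1) + /2) with (t + 1) by (unfold t; ring).
  replace (p - (IZR j + 1) + /2) with (t - 1) by (unfold t; ring).
  destruct (Rle_dec t 0) as [ht0 | ht0]; [| destruct (Rle_dec t 1) as [ht1 | ht1]].
  - rewrite (clamp01_le0 t), (clamp01_le0 (t - 1)), (clamp01_le0 ((t - 1 + nu) / nu)).
    + rewrite Rmult_0_r, Rplus_0_r. now apply flux3_const_right.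
    + pose proof (Rinv_0_lt_compat nu hnu0). unfold Rdiv. nra.
    + lra.
    + lra.
  - rewrite (clamp01_ge1 (t + 1)), (clamp01_id t), (clamp01_le0 (t - 1)) by lra.
    rewrite Rmult_1_r, Rmult_0_r, Rplus_0_r.
    replace (b + (a - b)) with a by ring.
    apply flux3_convex; lra.
  - rewrite (clamp01_ge1 (t + 1)), (clamp01_ge1 t), (clamp01_ge1 ((t - 1 + nu) / nu)).
    + now apply flux3_const_left.
    + apply Rle_div_r; lra.
    + lra.
    + lra.
Qed.

Lemma ldw_step_jump_avg nu a b p : 0 < nu -> nu <= 1 ->
  ldw_step nu (jump_avg a b p) = jump_avg a b (p + nu).
Proof.
  intros hnu0 hnu1. apply functional_extensionality. intros j.
  unfold ldw_step. rewrite !ldw_flux_jump_avg, minus_IZR by lra.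
  unfold jump_avg.
  replace (p - (IZR j - 1) + /2 - 1 + nu) with (p - IZR j + /2 + nu) by ring.
  replace (p + nu - IZR j + /2) with (p - IZR j + /2 + nu) by ring.
  rewrite <- (clamp01_flux_balance nu (p - IZR j + /2)) by lra.
  ring.
Qed.

Lemma is_RInt_const_on (f : R -> R) (v lo hi : R) : lo <= hi ->
  (forall x, lo < x < hi -> f x = v) -> is_RInt f lo hi ((hi - lo) * v).
Proof.
  intros hlh hf.
  apply (is_RInt_ext (fun _ => v)).
  - intros x hx. rewrite Rmin_left, Rmax_right in hx by lra. symmetry. now apply hf.
  - apply (@is_RInt_const R_NormedModule).
Qed.

Lemma is_RInt_jump (f : R -> R) a b X lo hi : lo < hi ->
  (forall x, x < X -> f x = a) -> (forall x, X < x -> f x = b) ->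
  is_RInt f lo hi (b * (hi - lo) + (a - b) * Rmin (hi - lo) (Rmax 0 (X - lo))).
Proof.
  intros hlh ha hb.
  destruct (Rle_dec X lo) as [hXlo | hXlo]; [| destruct (Rle_dec hi X) as [hXhi | hXhi]].
  - rewrite (Rmax_left 0), Rmin_right by lra.
    replace (b * (hi - lo) + (a - b) * 0) with ((hi - lo) * b) by ring.
    apply is_RInt_const_on; [lra |]. intros x hx. apply hb; lra.
  - rewrite (Rmax_right 0), Rmin_left by lra.
    replace (b * (hi - lo) + (a - b) * (hi - lo)) with ((hi - lo) * a) by ring.
    apply is_RInt_const_on; [lra |]. intros x hx. apply ha; lra.
  - rewrite (Rmax_right 0), Rmin_right by lra.
    replace (b * (hi - lo) + (a - b) * (X - lo)) with ((X - lo) * a + (hi - X) * b) by ring.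
    apply (is_RInt_Chasles f lo X hi).
    + apply is_RInt_const_on; [lra |]. intros x hx. apply ha; lra.
    + apply is_RInt_const_on; [lra |]. intros x hx. apply hb; lra.
Qed.

Lemma RiemannInt_cell_jump (f : R -> R) a b X dx j : 0 < dx ->
  (forall x, x < X -> f x = a) -> (forall x, X < x -> f x = b) ->
  forall pr : Riemann_integrable f ((IZR j - /2) * dx) ((IZR j + /2) * dx),
  RiemannInt pr / dx = jump_avg a b (X / dx) j.
Proof.
  intros hdx ha hb pr.
  assert (hcell : (IZR j - /2) * dx < (IZR j + /2) * dx) by nra.
  rewrite <- RInt_Reals, (is_RInt_unique _ _ _ _ (is_RInt_jump f a b X _ _ hcell ha hb)).
  replace ((IZR j + /2) * dx - (IZR j - /2) * dx) with dx by field.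
  rewrite <- (Rmult_clamp01_div dx) by lra.
  unfold jump_avg.
  replace (X / dx - IZR j + /2) with ((X - (IZR j - /2) * dx) / dx) by (field; lra).
  field; lra.
Qed.

Theorem mainTheorem4
  (u dt dx a b x0 : R) (cini : R -> R) (c : nat -> Z -> R)
  (hu : 0 < u) (hdt : 0 < dt) (hdx : 0 < dx)
  (hnu0 : 0 < u * dt / dx) (hnu1 : u * dt / dx <= 1)
  (hleft : forall x, x < x0 -> cini x = a)
  (hright : forall x, x0 < x -> cini x = b)
  (hinit : forall j : Z,
      exists pr : Riemann_integrable cini ((IZR j - /2) * dx) ((IZR j + /2) * dx),
        c 0%nat j = RiemannInt pr / dx)
  (hstep : forall (n : nat) (j : Z),
      c (S n) j = ldw_step (u * dt / dx) (c n) j) :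
  forall (n : nat) (j : Z),
    exists pr : Riemann_integrable (fun x => cini (x - u * INR n * dt))
                  ((IZR j - /2) * dx) ((IZR j + /2) * dx),
      c n j = RiemannInt pr / dx.
Proof.
  set (X n := x0 + u * INR n * dt).
  assert (hleftn : forall n x, x < X n -> cini (x - u * INR n * dt) = a)
    by (intros; apply hleft; unfold X in *; lra).
  assert (hrightn : forall n x, X n < x -> cini (x - u * INR n * dt) = b)
    by (intros; apply hright; unfold X in *; lra).
  assert (hexact : forall n, c n = jump_avg a b (X n / dx)).
  { induction n as [| n IH]; apply functional_extensionality; intros j.
    - destruct (hinit j) as [pr ->].
      rewrite (RiemannInt_cell_jump cini a b x0 dx j hdx hleft hright).
      unfold X; simpl. f_equal. field; lra.
    - rewrite hstep, IH, ldw_step_jump_avg by lra.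
      unfold X. rewrite S_INR. f_equal. field; lra. }
  intros n j.
  assert (hcell : (IZR j - /2) * dx < (IZR j + /2) * dx) by nra.
  exists (ex_RInt_Reals_0 _ _ _ (ex_intro _ _ (is_RInt_jump _ a b _ _ _ hcell (hleftn n) (hrightn n)))).
  rewrite (RiemannInt_cell_jump _ a b _ dx j hdx (hleftn n) (hrightn n)).
  now rewrite hexact.
Qed.
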